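(* Let $\triangle$ be an apexed triangle with definer $s$ and let $x\in P$. If there is a point $x'$ on $\pi(s,x)$ with $f_\triangle(x')<d(s,x')$, then $f_\triangle(x)<d(s,x)$.
   Context: $P$ is a simple polygon, $S$ a finite set of sites in $P$, $\pi(x,y)$ the shortest path in $P$ between $x$ and $y$, and $d(x,y)$ its Euclidean length. An apexed triangle is a Euclidean triangle $\triangle\subseteq P$ with corners $a,b,c$, where the apex $a$ is a vertex of $P$, $b,c$ lie on a common edge of $P$, together with a site $s\in S$ (the definer) such that $d(x,s)=\|x-a\|+d(a,s)$ for all $x\in\triangle$. Its function $f_\triangle$ is defined as follows. Let $u_1=(b-a)/\|b-a\|$, $u_2=(c-a)/\|c-a\|$, $R_{in}=\{a+\lambda u_1+\mu u_2:\lambda,\mu\ge0\}$, $L=\{x\notin R_{in}:\langle x-a,u_1\rangle\ge\langle x-a,u_2\rangle\}$, $R=\{x\notin R_{in}:\langle x-a,u_2\rangle>\langle x-a,u_1\rangle\}$, $L_{top}=\{x\in L:\langle x-a,u_1\rangle<0\}$, $R_{top}=\{x\in R:\langle x-a,u_2\rangle<0\}$. For $x\in L$ (resp. $R$) let $\hat x$ be the orthogonal projection of $x$ onto the line through $a$ with direction $u_1$ (resp. $u_2$); for $x\in R_{in}$ let $\hat x=x$. Then $f_\triangle(x)=d(a,s)-\|\hat x-a\|$ for $x\in L_{top}\cup R_{top}$ and $f_\triangle(x)=d(a,s)+\|\hat x-a\|$ otherwise. *)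

From Stdlib Require Import Reals Lra List Sorted ClassicalEpsilon.
Import ListNotations.
Open Scope R_scope.

Definition pt : Type := (R * R)%type.
Definition padd (p q : pt) : pt := (fst p + fst q, snd p + snd q).
Definition psub (p q : pt) : pt := (fst p - fst q, snd p - snd q).
Definition pscale (k : R) (p : pt) : pt := (k * fst p, k * snd p).
Definition dot (p q : pt) : R := fst p * fst q + snd p * snd q.
Definition norm (p : pt) : R := sqrt (dot p p).
Definition dist (p q : pt) : R := norm (psub p q).

Definition on_seg (e : pt * pt) (x : pt) : Prop :=
  exists t, 0 <= t <= 1 /\ x = padd (fst e) (pscale t (psub (snd e) (fst e))).

(** Polygon given by its cyclic list of vertices V = [v_0; ...; v_{n-1}];
    edge i joins v_i and v_{(i+1) mod n}. *)
Definition edge (V : list pt) (i : nat) : pt * pt :=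
  (nth i V (0,0), nth (S i mod length V) V (0,0)).

Definition on_boundary (V : list pt) (x : pt) : Prop :=
  exists i, (i < length V)%nat /\ on_seg (edge V i) x.

Definition simple_polygon (V : list pt) : Prop :=
  (3 <= length V)%nat /\ NoDup V /\
  forall i j x, (i < j)%nat -> (j < length V)%nat ->
    on_seg (edge V i) x -> on_seg (edge V j) x ->
    (j = S i /\ x = nth j V (0,0)) \/
    (i = 0%nat /\ j = pred (length V) /\ x = nth 0 V (0,0)).

Definition continuous_on01 (g : R -> pt) : Prop :=
  forall t, 0 <= t <= 1 -> forall eps, eps > 0 ->
    exists del, del > 0 /\ forall t', 0 <= t' <= 1 -> Rabs (t' - t) < del ->
      dist (g t') (g t) < eps.

Definition maxnorm (V : list pt) : R := fold_right (fun p m => Rmax (norm p) m) 0 V.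

(** The closed region P bounded by the polygon (boundary together with the
    bounded component of its complement): the points that cannot be joined to a
    point outside the disk containing all vertices without meeting the boundary. *)
Definition polygon_region (V : list pt) (x : pt) : Prop :=
  forall g, continuous_on01 g -> g 0 = x -> norm (g 1) > maxnorm V ->
    exists t, 0 <= t <= 1 /\ on_boundary V (g t).

Fixpoint chord_sum (g : R -> pt) (l : list R) : R :=
  match l with
  | t1 :: ((t2 :: _) as tl) => dist (g t1) (g t2) + chord_sum g tl
  | _ => 0
  end.

Definition chord_sums (g : R -> pt) (r : R) : Prop :=
  exists l, Sorted Rle l /\ Forall (fun t => 0 <= t <= 1) l /\
            r = chord_sum g (0 :: l ++ [1]).

Definition has_length (g : R -> pt) (L : R) : Prop := is_lub (chord_sums g) L.

Definition path_in (P : pt -> Prop) (g : R -> pt) (x y : pt) : Prop :=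
  continuous_on01 g /\ g 0 = x /\ g 1 = y /\ forall t, 0 <= t <= 1 -> P (g t).

Definition path_lengths (P : pt -> Prop) (x y : pt) (L : R) : Prop :=
  exists g, path_in P g x y /\ has_length g L.

Definition is_glb (E : R -> Prop) (m : R) : Prop :=
  (forall r, E r -> m <= r) /\ (forall m', (forall r, E r -> m' <= r) -> m' <= m).

Definition geodist (P : pt -> Prop) (x y : pt) : R :=
  epsilon (inhabits 0) (fun m => is_glb (path_lengths P x y) m).

(** z lies on the (unique) shortest path pi(x,y) in P. *)
Definition on_shortest_path (P : pt -> Prop) (x y z : pt) : Prop :=
  exists g, path_in P g x y /\ has_length g (geodist P x y) /\
            exists t, 0 <= t <= 1 /\ g t = z.

Definition in_triangle (a b c x : pt) : Prop :=
  exists al be ga, 0 <= al /\ 0 <= be /\ 0 <= ga /\ al + be + ga = 1 /\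
    x = padd (pscale al a) (padd (pscale be b) (pscale ga c)).

Definition apexed_triangle (V S : list pt) (a b c s : pt) : Prop :=
  In a V /\
  (exists i, (i < length V)%nat /\ on_seg (edge V i) b /\ on_seg (edge V i) c) /\
  b <> a /\ c <> a /\
  (forall x, in_triangle a b c x -> polygon_region V x) /\
  In s S /\
  forall x, in_triangle a b c x ->
    geodist (polygon_region V) x s = dist x a + geodist (polygon_region V) a s.

Definition unit_dir (a b : pt) : pt := pscale (/ norm (psub b a)) (psub b a).

Definition R_in (a b c x : pt) : Prop :=
  exists la mu, 0 <= la /\ 0 <= mu /\
    x = padd a (padd (pscale la (unit_dir a b)) (pscale mu (unit_dir a c))).

Definition in_L (a b c x : pt) : Prop :=
  ~ R_in a b c x /\ dot (psub x a) (unit_dir a b) >= dot (psub x a) (unit_dir a c).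
Definition in_R (a b c x : pt) : Prop :=
  ~ R_in a b c x /\ dot (psub x a) (unit_dir a c) > dot (psub x a) (unit_dir a b).
Definition in_Ltop (a b c x : pt) : Prop :=
  in_L a b c x /\ dot (psub x a) (unit_dir a b) < 0.
Definition in_Rtop (a b c x : pt) : Prop :=
  in_R a b c x /\ dot (psub x a) (unit_dir a c) < 0.

Definition proj_line (a u x : pt) : pt := padd a (pscale (dot (psub x a) u) u).

Definition xhat (a b c x : pt) : pt :=
  if excluded_middle_informative (R_in a b c x) then x
  else if excluded_middle_informative (in_L a b c x) then proj_line a (unit_dir a b) x
  else proj_line a (unit_dir a c) x.

Definition f_tri (V : list pt) (a b c s x : pt) : R :=
  if excluded_middle_informative (in_Ltop a b c x \/ in_Rtop a b c x)
  then geodist (polygon_region V) a s - norm (psub (xhat a b c x) a)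
  else geodist (polygon_region V) a s + norm (psub (xhat a b c x) a).

(* f_triangle(x) = d(a,s) + h(x - a), where h(v) is the maximum of <v,w> over the unit vectors w
   of the cone spanned by b - a and c - a: inside the cone the maximiser is v/|v|, outside it one
   of the two extreme rays.  Being a maximum of 1-Lipschitz linear functions, f_triangle is
   1-Lipschitz.
   If x' lies on the shortest path from s to x, then d(s,x') + |x' - x| <= d(s,x), hence
   f(x) <= f(x') + |x - x'| < d(s,x') + |x - x'| <= d(s,x). *)

From Pilot Require Import Defs.
From Stdlib Require Import Reals List Lra Psatz Sorted ClassicalEpsilon.
Import ListNotations.
Open Scope R_scope.

Lemma dot_comm p q : dot p q = dot q p.
Proof. unfold dot; ring. Qed.

Lemma dot_paddr p q r : dot p (padd q r) = dot p q + dot p r.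
Proof. unfold dot, padd; simpl; ring. Qed.

Lemma dot_pscaler p k q : dot p (pscale k q) = k * dot p q.
Proof. unfold dot, pscale; simpl; ring. Qed.

Lemma dot_paddl p q r : dot (padd p q) r = dot p r + dot q r.
Proof. unfold dot, padd; simpl; ring. Qed.

Lemma dot_pscalel k p q : dot (pscale k p) q = k * dot p q.
Proof. unfold dot, pscale; simpl; ring. Qed.

Lemma dot_psubl p q r : dot (psub p q) r = dot p r - dot q r.
Proof. unfold dot, psub; simpl; ring. Qed.

Lemma dot_self_ge0 p : 0 <= dot p p.
Proof. destruct p as [p1 p2]; unfold dot; simpl; nra. Qed.

Lemma norm_ge0 p : 0 <= norm p.
Proof. apply sqrt_pos. Qed.

Lemma norm_mul_norm p : norm p * norm p = dot p p.
Proof. apply sqrt_sqrt, dot_self_ge0. Qed.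

Lemma norm_unit u : dot u u = 1 -> norm u = 1.
Proof. intro Hu; unfold norm; rewrite Hu; apply sqrt_1. Qed.

Lemma Rabs_dot_le p q : Rabs (dot p q) <= norm p * norm q.
Proof.
  assert (Hsq : dot p q * dot p q <= (norm p * norm q) * (norm p * norm q)).
  { replace (norm p * norm q * (norm p * norm q)) with (norm p * norm p * (norm q * norm q))
      by ring.
    rewrite !norm_mul_norm. destruct p as [p1 p2], q as [q1 q2]; unfold dot; simpl.
    pose proof (Rle_0_sqr (p1 * q2 - p2 * q1)); unfold Rsqr in *; nra. }
  pose proof (Rmult_le_pos _ _ (norm_ge0 p) (norm_ge0 q)).
  apply Rabs_le; split; nra.
Qed.

Lemma dot_unit_le p u : dot u u = 1 -> dot p u <= norm p.
Proof.
  intro Hu. pose proof (Rabs_dot_le p u) as H. rewrite (norm_unit u Hu), Rmult_1_r in H.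
  exact (Rle_trans _ _ _ (Rle_abs _) H).
Qed.

Lemma dot_unit_bounds u v : dot u u = 1 -> dot v v = 1 -> -1 <= dot u v <= 1.
Proof.
  intros Hu Hv. pose proof (Rabs_dot_le u v) as H.
  rewrite (norm_unit u Hu), (norm_unit v Hv), Rmult_1_r in H.
  revert H; unfold Rabs; destruct Rcase_abs; lra.
Qed.

Lemma dist_sym p q : Defs.dist p q = Defs.dist q p.
Proof.
  unfold Defs.dist, norm. f_equal. destruct p, q; unfold dot, psub; simpl; ring.
Qed.

(* For unit vectors u1, u2 with k = <u1,u2> and w = la u1 + mu u2, the equation below says that w
   is a unit vector, and la + mu k = <u1,w>, la k + mu = <u2,w>. *)
Lemma cone_coeff_bounds k la mu : -1 <= k <= 1 -> 0 <= la -> 0 <= mu ->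
  la * la + mu * mu + 2 * k * la * mu = 1 -> k <= la + mu * k <= 1.
Proof.
  intros Hk Hla Hmu Hunit.
  assert (Hsq : forall r, 0 <= r -> r * r <= 1 -> r <= 1) by (intros r Hr H; nra).
  assert (HP : (la + mu * k) * (la + mu * k) = 1 - mu * mu * (1 - k * k)) by nra.
  assert (HQ : (la * k + mu) * (la * k + mu) = 1 - la * la * (1 - k * k)) by nra.
  assert (0 <= mu * mu * (1 - k * k)) by (apply Rmult_le_pos; nra).
  assert (0 <= la * la * (1 - k * k)) by (apply Rmult_le_pos; nra).
  assert (HP1 : la + mu * k <= 1).
  { destruct (Rle_lt_dec 0 (la + mu * k)); [apply Hsq; lra | lra]. }
  split; [|exact HP1].
  destruct (Rle_lt_dec k 0).
  - assert (la * k + mu <= 1).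
    { destruct (Rle_lt_dec 0 (la * k + mu)); [apply Hsq; lra | lra]. }
    assert (0 <= - k * (1 - (la * k + mu))) by (apply Rmult_le_pos; lra).
    assert (0 <= la * (1 - k * k)) by (apply Rmult_le_pos; nra).
    assert (la + mu * k - k * (la * k + mu) = la * (1 - k * k)) by ring.
    nra.
  - assert (0 <= k * la * mu) by (repeat apply Rmult_le_pos; lra).
    assert (mu <= 1) by (apply Hsq; nra).
    assert (0 <= la + mu * k) by nra.
    assert (k * k <= (la + mu * k) * (la + mu * k)).
    { rewrite HP.
      assert (mu * mu * (1 - k * k) <= 1 - k * k)
        by (rewrite <- (Rmult_1_l (1 - k * k)) at 2; apply Rmult_le_compat_r; nra).
      lra. }
    destruct (Rle_lt_dec k (la + mu * k)); [assumption | nra].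
Qed.

Lemma cone_coeff_sum k la mu : -1 <= k <= 1 -> 0 <= la -> 0 <= mu ->
  la * la + mu * mu + 2 * k * la * mu = 1 -> 1 + k <= (la + mu * k) + (la * k + mu).
Proof.
  intros Hk Hla Hmu Hunit.
  assert (0 <= (1 - k) * la * mu) by (repeat apply Rmult_le_pos; lra).
  assert (1 <= la + mu) by (destruct (Rle_lt_dec 1 (la + mu)); [assumption | nra]).
  assert ((la + mu * k) + (la * k + mu) = (la + mu) * (1 + k)) by ring.
  nra.
Qed.

Lemma lincomb_le_Rmax k P Q al be : k <= P <= 1 -> k <= Q <= 1 -> 1 + k <= P + Q ->
  al < 0 \/ be < 0 -> al * P + be * Q <= Rmax (al + be * k) (al * k + be).
Proof.
  intros HP HQ HPQ Hneg.
  assert (Hle2 : al * P + be * Q <= al * k + be ->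
                 al * P + be * Q <= Rmax (al + be * k) (al * k + be))
    by (intro; eapply Rle_trans; [eassumption | apply Rmax_r]).
  assert (Hle1 : al * P + be * Q <= al + be * k ->
                 al * P + be * Q <= Rmax (al + be * k) (al * k + be))
    by (intro; eapply Rle_trans; [eassumption | apply Rmax_l]).
  destruct (Rlt_or_le al 0), (Rlt_or_le be 0).
  - destruct (Rle_lt_dec al be); [apply Hle2 | apply Hle1]; nra.
  - apply Hle2; nra.
  - apply Hle1; nra.
  - destruct Hneg; lra.
Qed.

Definition det (p q : pt) : R := fst p * snd q - snd p * fst q.

Lemma cramer u1 u2 v : det u1 u2 <> 0 ->
  v = padd (pscale (det v u2 / det u1 u2) u1) (pscale (det u1 v / det u1 u2) u2).
Proof.
  destruct u1 as [p1 q1], u2 as [p2 q2], v as [v1 v2]; unfold det, padd, pscale; simpl.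
  intro D. f_equal; field; exact D.
Qed.

Lemma det_eq0_parallel u1 u2 : dot u1 u1 = 1 -> det u1 u2 = 0 -> u2 = pscale (dot u1 u2) u1.
Proof.
  destruct u1 as [p1 q1], u2 as [p2 q2]; unfold dot, det, pscale; simpl.
  intros U D. f_equal.
  - transitivity (p2 * (p1 * p1 + q1 * q1) + q1 * (p1 * q2 - q1 * p2)); [rewrite U, D; ring | ring].
  - transitivity (q2 * (p1 * p1 + q1 * q1) - p1 * (p1 * q2 - q1 * p2)); [rewrite U, D; ring | ring].
Qed.

Definition in_cone (u1 u2 v : pt) : Prop :=
  exists la mu, 0 <= la /\ 0 <= mu /\ v = padd (pscale la u1) (pscale mu u2).

Lemma in_cone_l u1 u2 : in_cone u1 u2 u1.
Proof.
  exists 1, 0. repeat split; try lra.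
  destruct u1, u2; unfold padd, pscale; simpl; f_equal; ring.
Qed.

Lemma in_cone_r u1 u2 : in_cone u1 u2 u2.
Proof.
  exists 0, 1. repeat split; try lra.
  destruct u1, u2; unfold padd, pscale; simpl; f_equal; ring.
Qed.

Lemma in_cone_pscale u1 u2 t v : 0 <= t -> in_cone u1 u2 v -> in_cone u1 u2 (pscale t v).
Proof.
  intros Ht [la [mu [Hla [Hmu ->]]]].
  exists (t * la), (t * mu). repeat split; try (apply Rmult_le_pos; assumption).
  destruct u1, u2; unfold padd, pscale; simpl; f_equal; ring.
Qed.

Lemma dot_le_Rmax_outside_cone u1 u2 w v :
  dot u1 u1 = 1 -> dot u2 u2 = 1 -> dot w w = 1 ->
  in_cone u1 u2 w -> ~ in_cone u1 u2 v ->
  dot v w <= Rmax (dot v u1) (dot v u2).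
Proof.
  intros U1 U2 Uw [la [mu [Hla [Hmu ->]]]] Hv.
  pose proof (dot_unit_bounds u1 u2 U1 U2) as Hk.
  set (k := dot u1 u2) in Hk.
  assert (Hunit : la * la + mu * mu + 2 * k * la * mu = 1).
  { rewrite <- Uw, !dot_paddl, !dot_paddr, !dot_pscalel, !dot_pscaler, U1, U2, (dot_comm u2 u1).
    fold k; ring. }
  destruct (Req_dec (det u1 u2) 0) as [D0|D0].
  - (* u2 = k u1 with k = 1 or -1, and then w is u1 or u2. *)
    pose proof (det_eq0_parallel u1 u2 U1 D0) as Hpar. fold k in Hpar.
    assert (Hk2 : k * k = 1).
    { rewrite Hpar, dot_pscalel, dot_pscaler, U1 in U2; lra. }
    set (P := la + mu * k).
    assert (HP2 : P * P = 1) by (unfold P; nra).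
    rewrite Hpar, dot_paddr, !dot_pscaler.
    replace (la * dot v u1 + mu * (k * dot v u1)) with (P * dot v u1) by (unfold P; ring).
    destruct (Rle_lt_dec 0 P) as [HP|HP].
    + replace P with 1 by nra. rewrite Rmult_1_l. apply Rmax_l.
    + assert (k < 0) by (destruct (Rle_lt_dec 0 k); [unfold P in HP; nra | assumption]).
      replace P with k by nra. apply Rmax_r.
  - rewrite (cramer u1 u2 v D0) in Hv |- *.
    set (al := det v u2 / det u1 u2) in *. set (be := det u1 v / det u1 u2) in *.
    assert (Hneg : al < 0 \/ be < 0).
    { destruct (Rlt_or_le al 0), (Rlt_or_le be 0); auto.
      exfalso; apply Hv; exists al, be; auto. }
    rewrite !dot_paddl, !dot_paddr, !dot_pscalel, !dot_pscaler, U1, U2, (dot_comm u2 u1).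
    fold k; rewrite !Rmult_1_r.
    assert (HP := cone_coeff_bounds k la mu Hk Hla Hmu Hunit).
    assert (HQ : k <= la * k + mu <= 1).
    { assert (Hunit' : mu * mu + la * la + 2 * k * mu * la = 1) by lra.
      pose proof (cone_coeff_bounds k mu la Hk Hmu Hla Hunit'); lra. }
    pose proof (cone_coeff_sum k la mu Hk Hla Hmu Hunit) as HPQ.
    eapply Rle_trans; [| apply (lincomb_le_Rmax k _ _ al be HP HQ HPQ Hneg)].
    right; ring.
Qed.

(* The support function of the arc of unit vectors in the cone spanned by u1 and u2
   (cone_support_ge_dot and cone_support_attained). *)
Definition cone_support (u1 u2 v : pt) : R :=
  if excluded_middle_informative (in_cone u1 u2 v) then norm v
  else Rmax (dot v u1) (dot v u2).

Section ConeSupport.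

Variables u1 u2 : pt.
Hypotheses (U1 : dot u1 u1 = 1) (U2 : dot u2 u2 = 1).

Lemma cone_support_ge_dot v w :
  dot w w = 1 -> in_cone u1 u2 w -> dot v w <= cone_support u1 u2 v.
Proof.
  intros Uw Hw. unfold cone_support.
  destruct (excluded_middle_informative (in_cone u1 u2 v)) as [Hv|Hv].
  - exact (dot_unit_le v w Uw).
  - exact (dot_le_Rmax_outside_cone u1 u2 w v U1 U2 Uw Hw Hv).
Qed.

Lemma cone_support_attained v :
  exists w, dot w w = 1 /\ in_cone u1 u2 w /\ cone_support u1 u2 v = dot v w.
Proof.
  unfold cone_support.
  destruct (excluded_middle_informative (in_cone u1 u2 v)) as [Hv|Hv].
  - destruct (Req_dec (norm v) 0) as [N0|N0].
    + exists u1. split; [exact U1 | split; [apply in_cone_l |]].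
      pose proof (Rabs_dot_le v u1) as H. rewrite N0, Rmult_0_l in H.
      rewrite N0. revert H; unfold Rabs; destruct Rcase_abs; lra.
    + assert (Hn : 0 < norm v) by (pose proof (norm_ge0 v); lra).
      exists (pscale (/ norm v) v).
      rewrite dot_pscalel, !dot_pscaler, <- norm_mul_norm.
      split; [field; lra | split; [| field; lra]].
      apply in_cone_pscale; [apply Rlt_le, Rinv_0_lt_compat, Hn | exact Hv].
  - apply Rmax_case.
    + exists u1. split; [exact U1 | split; [apply in_cone_l | reflexivity]].
    + exists u2. split; [exact U2 | split; [apply in_cone_r | reflexivity]].
Qed.

Lemma cone_support_lipschitz v v' :
  cone_support u1 u2 v <= cone_support u1 u2 v' + norm (psub v v').
Proof.
  destruct (cone_support_attained v) as [w [Uw [Hw ->]]].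
  pose proof (cone_support_ge_dot v' w Uw Hw).
  pose proof (dot_unit_le (psub v v') w Uw) as H'.
  rewrite dot_psubl in H'. lra.
Qed.

End ConeSupport.

Lemma unit_dir_unit a b : b <> a -> dot (unit_dir a b) (unit_dir a b) = 1.
Proof.
  intro Hab. unfold unit_dir. rewrite dot_pscalel, dot_pscaler, <- norm_mul_norm.
  assert (norm (psub b a) <> 0).
  { intro N0. apply Hab.
    assert (H : dot (psub b a) (psub b a) = 0) by (rewrite <- norm_mul_norm, N0; ring).
    destruct a as [a1 a2], b as [b1 b2]; unfold dot, psub in H; simpl in H.
    pose proof (Rle_0_sqr (b1 - a1)); pose proof (Rle_0_sqr (b2 - a2)); unfold Rsqr in *.
    f_equal; nra. }
  field; assumption.
Qed.

Lemma norm_psub_proj_line a u x :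
  dot u u = 1 -> norm (psub (proj_line a u x) a) = Rabs (dot (psub x a) u).
Proof.
  intro Hu. unfold norm, proj_line.
  replace (psub (padd a (pscale (dot (psub x a) u) u)) a) with (pscale (dot (psub x a) u) u)
    by (destruct a, u; unfold psub, padd, pscale; simpl; f_equal; ring).
  rewrite dot_pscalel, dot_pscaler, Hu, Rmult_1_r.
  apply sqrt_Rsqr_abs.
Qed.

Lemma R_in_iff a b c x :
  R_in a b c x <-> in_cone (unit_dir a b) (unit_dir a c) (psub x a).
Proof.
  assert (Hshift : forall w, x = padd a w <-> psub x a = w).
  { intro w. destruct x, a, w; unfold padd, psub; simpl.
    split; intro H; injection H as H1 H2; subst; f_equal; ring. }
  split; intros [la [mu [Hla [Hmu H]]]]; exists la, mu; repeat split; auto; apply Hshift; exact H.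
Qed.

Lemma if_sign_abs (P : Prop) (D d : R) : (P <-> d < 0) ->
  (if excluded_middle_informative P then D - Rabs d else D + Rabs d) = D + d.
Proof.
  intro HP. destruct (excluded_middle_informative P) as [H|H].
  - rewrite Rabs_left by (apply HP, H). ring.
  - rewrite Rabs_right by (destruct (Rlt_or_le d 0); [exfalso; apply H, HP |]; lra). reflexivity.
Qed.

Lemma f_tri_eq V a b c s x : b <> a -> c <> a ->
  f_tri V a b c s x =
  geodist (polygon_region V) a s + cone_support (unit_dir a b) (unit_dir a c) (psub x a).
Proof.
  intros Hb Hc. pose proof (unit_dir_unit a b Hb) as U1. pose proof (unit_dir_unit a c Hc) as U2.
  unfold f_tri, xhat, cone_support.
  destruct (excluded_middle_informative (in_cone (unit_dir a b) (unit_dir a c) (psub x a)))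
    as [Hin|Hout];
    destruct (excluded_middle_informative (R_in a b c x)) as [HR|HR];
    try (exfalso; apply HR || apply Hout; apply R_in_iff; assumption).
  - destruct (excluded_middle_informative _) as [[[[H _] _]|[[H _] _]]|_]; tauto.
  - destruct (excluded_middle_informative (in_L a b c x)) as [HL|HL].
    + rewrite norm_psub_proj_line by exact U1.
      rewrite if_sign_abs, Rmax_left; [reflexivity | apply Rge_le, HL |].
      unfold in_Ltop, in_Rtop, in_R.
      split; [intros [[_ H]|[[_ H] _]]; [exact H | exfalso; destruct HL; lra] |].
      intro H. left. split; assumption.
    + assert (HRR : in_R a b c x).
      { split; [exact HR |].
        destruct (Rlt_or_le (dot (psub x a) (unit_dir a b)) (dot (psub x a) (unit_dir a c)));
          [lra | exfalso; apply HL; split; [exact HR | lra]]. }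
      rewrite norm_psub_proj_line by exact U2.
      rewrite if_sign_abs, Rmax_right; [reflexivity | destruct HRR; lra |].
      unfold in_Ltop, in_Rtop. split; [intros [[H _]|[_ H]]; [contradiction | exact H] |].
      intro H. right. split; assumption.
Qed.

Lemma f_tri_lipschitz V a b c s y z : b <> a -> c <> a ->
  f_tri V a b c s y <= f_tri V a b c s z + Defs.dist y z.
Proof.
  intros Hb Hc. rewrite !f_tri_eq by assumption.
  pose proof (cone_support_lipschitz _ _ (unit_dir_unit a b Hb) (unit_dir_unit a c Hc)
                (psub y a) (psub z a)) as H.
  replace (psub (psub y a) (psub z a)) with (psub y z) in H
    by (destruct y, z, a; unfold psub; simpl; f_equal; ring).
  unfold Defs.dist. lra.
Qed.

Lemma chord_sum_app g l1 y l2 :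
  chord_sum g (l1 ++ y :: l2) = chord_sum g (l1 ++ [y]) + chord_sum g (y :: l2).
Proof.
  induction l1 as [|u0 [|u1 l1] IH]; simpl; [ring | ring |].
  simpl in IH. rewrite IH. ring.
Qed.

Lemma chord_sum_rescale g t l :
  chord_sum (fun u => g (t * u)) l = chord_sum g (map (Rmult t) l).
Proof.
  induction l as [|u0 [|u1 l] IH]; [reflexivity | reflexivity |].
  change (Defs.dist (g (t * u0)) (g (t * u1)) + chord_sum (fun u => g (t * u)) (u1 :: l) =
          Defs.dist (g (t * u0)) (g (t * u1)) + chord_sum g (map (Rmult t) (u1 :: l))).
  rewrite IH. reflexivity.
Qed.

Lemma rescaled_partition t l : 0 <= t <= 1 -> Sorted Rle l -> Forall (fun u => 0 <= u <= 1) l ->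
  Sorted Rle (map (Rmult t) l ++ [t]) /\ Forall (fun u => 0 <= u <= 1) (map (Rmult t) l ++ [t]).
Proof.
  intros Ht Hs Hf.
  assert (Hmap : Forall (fun u => 0 <= u <= t) (map (Rmult t) l)).
  { apply Forall_map. eapply Forall_impl; [| exact Hf]. intros u Hu; simpl; nra. }
  split.
  - apply StronglySorted_Sorted.
    apply Sorted_StronglySorted in Hs; [| intros u v w; apply Rle_trans].
    induction Hs as [|u l Hs IH Hu]; simpl; inversion Hf; inversion Hmap; subst.
    + repeat constructor.
    + constructor; [auto |].
      apply Forall_app; split; [| constructor; [simpl in *; lra | constructor]].
      apply Forall_map. eapply Forall_impl; [| exact Hu]. intros v Hv; simpl. nra.
  - apply Forall_app; split; [eapply Forall_impl; [| exact Hmap]; intros u Hu; lra |].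
    constructor; [lra | constructor].
Qed.

Lemma continuous_on01_rescale g t : 0 <= t <= 1 -> continuous_on01 g ->
  continuous_on01 (fun u => g (t * u)).
Proof.
  intros Ht Hg u Hu eps Heps.
  destruct (Hg (t * u) ltac:(nra) eps Heps) as [del [Hdel Hd]].
  exists (del / (t + 1)). split; [apply Rdiv_lt_0_compat; lra |].
  intros u' Hu' Hdu. apply Hd; [nra |].
  rewrite <- Rmult_minus_distr_l, Rabs_mult, (Rabs_pos_eq t) by lra.
  apply Rmult_lt_compat_r with (r := t + 1) in Hdu; [| lra].
  unfold Rdiv in Hdu. rewrite Rmult_assoc, Rinv_l, Rmult_1_r in Hdu by lra.
  pose proof (Rabs_pos (u' - u)). nra.
Qed.

Lemma path_in_rescale P g x y t : 0 <= t <= 1 -> path_in P g x y ->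
  path_in P (fun u => g (t * u)) x (g t).
Proof.
  intros Ht [Hc [H0 [_ HP]]]. split; [| split; [| split]].
  - apply continuous_on01_rescale; assumption.
  - rewrite Rmult_0_r. exact H0.
  - rewrite Rmult_1_r. reflexivity.
  - intros u Hu. apply HP. nra.
Qed.

Lemma chord_sums_rescale_le g L t r : 0 <= t <= 1 -> has_length g L ->
  chord_sums (fun u => g (t * u)) r -> r + Defs.dist (g t) (g 1) <= L.
Proof.
  intros Ht [Hub _] [l [Hs [Hf ->]]].
  destruct (rescaled_partition t l Ht Hs Hf) as [Hs' Hf'].
  assert (Hle := Hub _ (ex_intro _ _ (conj Hs' (conj Hf' eq_refl)))).
  rewrite chord_sum_rescale, map_cons, map_app, Rmult_0_r. cbn [map]. rewrite Rmult_1_r.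
  replace (0 :: (map (Rmult t) l ++ [t]) ++ [1]) with ((0 :: map (Rmult t) l) ++ t :: [1]) in Hle
    by (simpl; rewrite <- app_assoc; reflexivity).
  rewrite chord_sum_app in Hle. cbn [chord_sum] in Hle. simpl in *. lra.
Qed.

Lemma is_glb_exists (E : R -> Prop) r0 m0 :
  E r0 -> (forall r, E r -> m0 <= r) -> exists m, is_glb E m.
Proof.
  intros Hr0 Hm0.
  destruct (completeness (fun y => E (- y))) as [m [Hub Hlub]].
  - exists (- m0). intros y Hy. specialize (Hm0 _ Hy). lra.
  - exists (- r0). rewrite Ropp_involutive. exact Hr0.
  - exists (- m). split.
    + intros r Hr. assert (- r <= m) by (apply Hub; rewrite Ropp_involutive; exact Hr). lra.
    + intros m' Hm'.
      assert (m <= - m') by (apply Hlub; intros y Hy; specialize (Hm' _ Hy); lra). lra.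
Qed.

Lemma has_length_ge0 g L : has_length g L -> 0 <= L.
Proof.
  intros [Hub _]. apply Rle_trans with (chord_sum g (0 :: [] ++ [1])).
  - simpl. rewrite Rplus_0_r. apply norm_ge0.
  - apply Hub. exists []. repeat constructor.
Qed.

Lemma geodist_le_length P g x y L : path_in P g x y -> has_length g L -> geodist P x y <= L.
Proof.
  intros Hg HL. unfold geodist.
  assert (Hex : exists m, is_glb (path_lengths P x y) m).
  { apply (is_glb_exists _ L 0); [exists g; auto |].
    intros r [h [_ Hh]]. exact (has_length_ge0 h r Hh). }
  apply (proj1 (epsilon_spec (inhabits 0) _ Hex)). exists g; auto.
Qed.

Lemma geodist_add_dist_le_length P g x y L t : 0 <= t <= 1 -> path_in P g x y -> has_length g L ->
  geodist P x (g t) + Defs.dist (g t) y <= L.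
Proof.
  intros Ht Hg HL.
  set (h := fun u => g (t * u)).
  assert (Hbound : forall r, chord_sums h r -> r <= L - Defs.dist (g t) y).
  { intros r Hr. destruct Hg as [_ [_ [H1 _]]]. rewrite <- H1.
    pose proof (chord_sums_rescale_le g L t r Ht HL Hr). lra. }
  destruct (completeness (chord_sums h)) as [Lh HLh].
  - exists (L - Defs.dist (g t) y). exact Hbound.
  - exists (chord_sum h (0 :: [] ++ [1])), []. repeat constructor.
  - pose proof (geodist_le_length P h x (g t) Lh (path_in_rescale P g x y t Ht Hg) HLh).
    pose proof (proj2 HLh _ Hbound). lra.
Qed.

Theorem mainTheorem9 (V S : list pt) (a b c s x x' : pt) :
  simple_polygon V ->
  (forall q, In q S -> polygon_region V q) ->
  apexed_triangle V S a b c s ->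
  polygon_region V x ->
  on_shortest_path (polygon_region V) s x x' ->
  f_tri V a b c s x' < geodist (polygon_region V) s x' ->
  f_tri V a b c s x < geodist (polygon_region V) s x.
Proof.
  intros _ _ [_ [_ [Hb [Hc _]]]] _ [g [Hg [Hlen [t [Ht <-]]]]] Hlt.
  pose proof (geodist_add_dist_le_length _ g s x _ t Ht Hg Hlen) as Hsplit.
  pose proof (f_tri_lipschitz V a b c s x (g t) Hb Hc) as Hlip.
  rewrite dist_sym in Hlip. lra.
Qed.
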